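(* Let $M,N\ge1$, $\gamma>0$, $\lambda_x,\lambda_v,\lambda_w>0$, and let $\{(\hat x_i,\hat v_i)\}_{i=1}^N$ solve the centralized herding system \[ \frac{d\hat x_i}{dt}=\hat v_i,\qquad \frac{d\hat v_i}{dt}=\frac{\lambda_x}{N}\sum_{j=1}^N\hat\phi_{ij}(\hat x_j-\hat x_i)+\frac{\lambda_v}{N}\sum_{j=1}^N\hat\phi_{ij}(\hat v_j-\hat v_i)-\lambda_w\hat x_i,\qquad \hat\phi_{ij}=(1+|\hat x_i-\hat x_j|^2)^{-\gamma/2}. \] Fix $t>0$ and assume $\sum_{i,j}|\hat v_i(t)-\hat v_j(t)|=0$ while $\sum_{i,j}|\hat x_i(t)-\hat x_j(t)|\ne0$. Then $\mathcal{E}_2'(t)=\mathcal{E}_2''(t)=0$ and $\mathcal{E}_2'''(t)<0$.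
   Context: $|\cdot|$ is the Euclidean norm on $\mathbb{R}^M$. $X=\sum_i|\hat x_i|^2$, $V=\sum_i|\hat v_i|^2$, \[ S_\gamma=\begin{cases}\frac1N\sum_{i,j}\big\{(1+|\hat x_i-\hat x_j|^2)^{-(\gamma-2)/2}-1\big\}, & 0<\gamma<2,\\ \frac1N\sum_{i,j}\log(1+|\hat x_i-\hat x_j|^2), & \gamma=2,\\ \frac1N\sum_{i,j}\big\{1-(1+|\hat x_i-\hat x_j|^2)^{-(\gamma-2)/2}\big\}, & \gamma>2,\end{cases} \qquad \beta_\gamma=\begin{cases}2-\gamma,&0<\gamma<2,\\2,&\gamma=2,\\\gamma-2,&\gamma>2,\end{cases} \] and $\mathcal{E}_2=\lambda_wX+V+\lambda_x\beta_\gamma^{-1}S_\gamma$; primes denote time derivatives along the solution. *)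

From HB Require Import structures.
From mathcomp Require Import all_boot all_order all_algebra.
From mathcomp Require Import all_classical all_reals all_analysis.
Set Implicit Arguments. Unset Strict Implicit. Unset Printing Implicit Defensive.
Import Order.TTheory GRing.Theory Num.Theory.
Local Open Scope ring_scope.

(* A trajectory of N particles in R^M: x i k s = k-th coordinate of x_i at time s. *)

Definition sqdist {R : realType} {N M : nat} (x : 'I_N -> 'I_M -> R -> R)
  (i j : 'I_N) (s : R) : R := \sum_(k < M) (x i k s - x j k s) ^+ 2.

Definition eucl_dist {R : realType} {N M : nat} (x : 'I_N -> 'I_M -> R -> R)
  (i j : 'I_N) (s : R) : R := Num.sqrt (sqdist x i j s).

Definition phihat {R : realType} {N M : nat} (gamma : R) (x : 'I_N -> 'I_M -> R -> R)
  (i j : 'I_N) (s : R) : R := powR (1 + sqdist x i j s) (- (gamma / 2)).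

Definition Xhat {R : realType} {N M : nat} (x : 'I_N -> 'I_M -> R -> R) (s : R) : R :=
  \sum_(i < N) \sum_(k < M) (x i k s) ^+ 2.

Definition S_gamma {R : realType} {N M : nat} (gamma : R) (x : 'I_N -> 'I_M -> R -> R)
  (s : R) : R :=
  if gamma < 2 then
    (N%:R)^-1 * \sum_(i < N) \sum_(j < N)
       (powR (1 + sqdist x i j s) (- ((gamma - 2) / 2)) - 1)
  else if gamma == 2 then
    (N%:R)^-1 * \sum_(i < N) \sum_(j < N) ln (1 + sqdist x i j s)
  else
    (N%:R)^-1 * \sum_(i < N) \sum_(j < N)
       (1 - powR (1 + sqdist x i j s) (- ((gamma - 2) / 2))).

Definition beta_gamma {R : realType} (gamma : R) : R :=
  if gamma < 2 then 2 - gamma else if gamma == 2 then 2 else gamma - 2.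

Definition E2 {R : realType} {N M : nat} (gamma lx lw : R)
  (x v : 'I_N -> 'I_M -> R -> R) (s : R) : R :=
  lw * Xhat x s + Xhat v s + lx / beta_gamma gamma * S_gamma gamma x s.

From HB Require Import structures.
From mathcomp Require Import all_boot all_order all_algebra.
From mathcomp Require Import all_classical all_reals all_analysis.
From mathcomp Require Import ring lra.
Set Implicit Arguments. Unset Strict Implicit. Unset Printing Implicit Defensive.
Import Order.TTheory GRing.Theory Num.Theory numFieldNormedType.Exports.
Local Open Scope ring_scope.

(** For s > 0 the energy satisfies the dissipation identity
    E_2' = -(λ_v/N) Σ_{i,j} φ_ij |v_i - v_j|^2 : the factor 1/β_γ makes the
    derivative of λ_x S_γ/β_γ cancel the position coupling, the λ_w terms cancel,
    and the velocity coupling symmetrises because φ is symmetric.  At time t all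
    velocities agree, so every summand φ_ij |v_i - v_j|^2 vanishes together with
    its first derivative, whence E_2'(t) = E_2''(t) = 0 and
    E_2'''(t) = -(2 λ_v/N) Σ_{i,j} φ_ij |a_i - a_j|^2 with a_i = v_i'(t).
    With aligned velocities a_i = (λ_x/N) Σ_l φ_il (x_l - x_i) - λ_w x_i.  Project
    on e = x_a - x_b for two particles at distinct positions and take particles
    i, j maximising and minimising <x_l, e>: the coupling pushes i down and j up,
    so <a_i - a_j, e> <= -λ_w <x_i - x_j, e> < 0, hence a_i <> a_j and
    E_2'''(t) < 0. *)

Section PointwiseDerivatives.
Context {R : realType}.
Implicit Types (f g : R -> R) (s a b c : R).

Lemma is_deriveD_fun f g s a b : is_derive s 1 f a -> is_derive s 1 g b ->
  is_derive s 1 (fun u => f u + g u) (a + b).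
Proof. by move=> fa gb; exact: (is_deriveD fa gb). Qed.

Lemma is_deriveB_fun f g s a b : is_derive s 1 f a -> is_derive s 1 g b ->
  is_derive s 1 (fun u => f u - g u) (a - b).
Proof. by move=> fa gb; exact: (is_deriveB fa gb). Qed.

Lemma is_deriveM_fun f g s a b : is_derive s 1 f a -> is_derive s 1 g b ->
  is_derive s 1 (fun u => f u * g u) (f s * b + g s * a).
Proof. by move=> fa gb; exact: (is_deriveM fa gb). Qed.

Lemma is_deriveZ_fun c f s a : is_derive s 1 f a ->
  is_derive s 1 (fun u => c * f u) (c * a).
Proof. by move=> fa; exact: (is_deriveZ c fa). Qed.

Lemma is_derive_sum_fun n (h : 'I_n -> R -> R) (dh : 'I_n -> R) s :
  (forall i, is_derive s 1 (h i) (dh i)) ->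
  is_derive s 1 (fun u => \sum_(i < n) h i u) (\sum_(i < n) dh i).
Proof. by move=> hdh; rewrite -fct_sumE; exact: is_derive_sum. Qed.

Lemma is_derive_powR_fun p f s a : is_derive s 1 f a -> 0 < f s ->
  is_derive s 1 (fun u => powR (f u) p) (p * powR (f s) (p - 1) * a).
Proof. by move=> fa fs_gt0; exact: (is_derive1_comp (is_derive1_powR p fs_gt0) fa). Qed.

Lemma is_derive_ln_fun f s a : is_derive s 1 f a -> 0 < f s ->
  is_derive s 1 (fun u => ln (f u)) ((f s)^-1 * a).
Proof. by move=> fa fs_gt0; exact: (is_derive1_comp (is_derive1_ln fs_gt0) fa). Qed.

Lemma is_derive_sqsum n (w : 'I_n -> R -> R) (dw : 'I_n -> R) s :
  (forall k, is_derive s 1 (w k) (dw k)) ->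
  is_derive s 1 (fun u => \sum_(k < n) w k u ^+ 2) (\sum_(k < n) 2 * (w k s * dw k)).
Proof.
move=> wdw; apply: is_derive_sum_fun => k.
have -> : (fun u => w k u ^+ 2) = (fun u => w k u * w k u) by apply/funext => u.
apply: (is_derive_eq (is_deriveM_fun (wdw k) (wdw k))).
by rewrite mulr2n mulrDl mul1r.
Qed.

Lemma is_derive_derive1 f g s b : (\forall u \near s, is_derive (u : R) 1 f (g u)) ->
  is_derive s 1 g b -> is_derive s 1 (derive1 f) b.
Proof.
move=> fg gb; apply: near_eq_is_derive gb.
by apply: filterS fg => u fgu; rewrite derive1E derive_val.
Qed.

Lemma derive1_thrice f f1 f2 s b :
  (\forall u \near s, is_derive (u : R) 1 f (f1 u)) ->
  (\forall u \near s, is_derive (u : R) 1 f1 (f2 u)) -> is_derive s 1 f2 b ->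
  [/\ derive1 f s = f1 s, derive1 (derive1 f) s = f2 s
    & derive1 (derive1 (derive1 f)) s = b].
Proof.
move=> ff1 f1f2 f2b.
have ff2 : \forall u \near s, is_derive (u : R) 1 (derive1 f) (f2 u).
  by apply: filterS2 (near_join ff1) f1f2 => u; exact: is_derive_derive1.
have d1 := nbhs_singleton ff1; have d2 := nbhs_singleton ff2.
have d3 := is_derive_derive1 ff2 f2b.
by rewrite !derive1E !derive_val.
Qed.

End PointwiseDerivatives.

Section WeightedSquaredNorm.
Context {R : realType} {n : nat}.
Variables (p dp : R -> R) (w dw : 'I_n -> R -> R).
Implicit Types s : R.

Definition wsqnorm s := p s * \sum_(k < n) w k s ^+ 2.

Definition wsqnorm_deriv s :=
  dp s * \sum_(k < n) w k s ^+ 2 + p s * \sum_(k < n) 2 * (w k s * dw k s).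

Lemma is_derive_wsqnorm s : is_derive s 1 p (dp s) ->
  (forall k, is_derive s 1 (w k) (dw k s)) -> is_derive s 1 wsqnorm (wsqnorm_deriv s).
Proof.
move=> pdp wdw; apply: (is_derive_eq (is_deriveM_fun pdp (is_derive_sqsum wdw))).
by rewrite addrC mulrC.
Qed.

Variable t : R.
Hypothesis w_t : forall k, w k t = 0.

Lemma wsqnorm_eq0 : wsqnorm t = 0.
Proof. by rewrite /wsqnorm big1 ?mulr0 // => k _; rewrite w_t expr0n. Qed.

Lemma wsqnorm_deriv_eq0 : wsqnorm_deriv t = 0.
Proof.
rewrite /wsqnorm_deriv !big1 ?(mulr0, addr0) // => k _.
  by rewrite w_t mul0r mulr0.
by rewrite w_t expr0n.
Qed.

Lemma is_derive_wsqnorm_deriv : is_derive t 1 p (dp t) -> derivable dp t 1 ->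
  (forall k, is_derive t 1 (w k) (dw k t)) -> (forall k, derivable (dw k) t 1) ->
  is_derive t 1 wsqnorm_deriv (2 * (p t * \sum_(k < n) dw k t ^+ 2)).
Proof.
move=> pdp /derivableP ddp wdw ddw.
have w_ddw k := is_deriveZ_fun 2 (is_deriveM_fun (wdw k) (derivableP (ddw k))).
apply: (is_derive_eq (is_deriveD_fun (is_deriveM_fun ddp (is_derive_sqsum wdw))
                                     (is_deriveM_fun pdp (is_derive_sum_fun w_ddw)))).
have [-> ->] : \sum_(k < n) 2 * (w k t * dw k t) = 0 /\ \sum_(k < n) w k t ^+ 2 = 0.
  by split; apply: big1 => k _; rewrite w_t ?mul0r ?mulr0 ?expr0n.
rewrite (eq_bigr (fun k => 2 * dw k t ^+ 2)) => [|k _]; last first.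
  by rewrite w_t mul0r add0r expr2.
by rewrite -mulr_sumr; ring.
Qed.

End WeightedSquaredNorm.

Lemma sum_coupling_symmetric (R : comPzRingType) (n m : nat) (c : R)
    (p : 'I_n -> 'I_n -> R) (a b : 'I_n -> 'I_m -> R) :
  (forall i j, p i j = p j i) ->
  \sum_(i < n) \sum_(k < m) 2 * (a i k * (c * \sum_(j < n) p i j * (b j k - b i k))) =
  - (c * \sum_(i < n) \sum_(j < n) p i j * \sum_(k < m) (b i k - b j k) * (a i k - a j k)).
Proof.
move=> pC.
pose T i j := p i j * \sum_(k < m) a i k * (b j k - b i k).
have -> : \sum_(i < n) \sum_(k < m) 2 * (a i k * (c * \sum_(j < n) p i j * (b j k - b i k)))
    = c * (2 * \sum_(i < n) \sum_(j < n) T i j).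
  rewrite !mulr_sumr; apply: eq_bigr => i _.
  transitivity (\sum_(k < m) \sum_(j < n) c * (2 * (p i j * (a i k * (b j k - b i k))))).
    by apply: eq_bigr => k _; rewrite !mulr_sumr; apply: eq_bigr => j _; ring.
  rewrite exchange_big /= !mulr_sumr; apply: eq_bigr => j _.
  by rewrite /T !mulr_sumr; apply: eq_bigr => k _.
rewrite mulr_natl mulr2n [X in _ + X]exchange_big /=.
rewrite -big_split -mulrN -sumrN; congr (_ * _); apply: eq_bigr => i _ /=.
rewrite -big_split -sumrN; apply: eq_bigr => j _ /=.
rewrite /T (pC j i) -mulrDr -mulrN -sumrN -big_split /=; congr (_ * _).
by apply: eq_bigr => k _; ring.
Qed.

Lemma sumsq_ge0 (R : realDomainType) (m : nat) (d : 'I_m -> R) :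
  0 <= \sum_(k < m) d k ^+ 2.
Proof. by apply: sumr_ge0 => k _; exact: sqr_ge0. Qed.

Lemma sumsq_eq0P (R : realDomainType) (m : nat) (d : 'I_m -> R) :
  reflect (forall k, d k = 0) (\sum_(k < m) d k ^+ 2 == 0).
Proof.
apply: (iffP eqP) => [d0 k|d0]; last by rewrite big1 // => k _; rewrite d0 expr0n.
apply/eqP; rewrite -sqrf_eq0; apply/eqP.
by apply: (psumr_eq0P _ d0) => // l _; exact: sqr_ge0.
Qed.

Lemma psumr2_gt0 (R : numDomainType) (n : nat) (F : 'I_n -> 'I_n -> R) (i j : 'I_n) :
  (forall i j, 0 <= F i j) -> 0 < F i j -> 0 < \sum_(i < n) \sum_(j < n) F i j.
Proof.
move=> F_ge0 Fij_gt0; apply: (lt_le_trans Fij_gt0).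
rewrite (bigD1 i) //= (bigD1 j) //= -addrA lerDl.
by apply: addr_ge0; apply: sumr_ge0 => *; rewrite ?sumr_ge0.
Qed.

Lemma attraction_spread (R : realFieldType) (n m : nat) (c lw : R)
    (phi : 'I_n -> 'I_n -> R) (y acc : 'I_n -> 'I_m -> R) (a b : 'I_n) :
  0 <= c -> 0 < lw -> (forall i j, 0 <= phi i j) ->
  (forall i k, acc i k = c * \sum_(l < n) phi i l * (y l k - y i k) - lw * y i k) ->
  0 < \sum_(k < m) (y a k - y b k) ^+ 2 ->
  exists i j, 0 < \sum_(k < m) (acc i k - acc j k) ^+ 2.
Proof.
move=> c_ge0 lw_gt0 phi_ge0 accE yab.
pose e k := y a k - y b k.
pose f l := \sum_(k < m) y l k * e k.
have acc_e i : \sum_(k < m) acc i k * e k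
    = c * \sum_(l < n) phi i l * (f l - f i) - lw * f i.
  transitivity (\sum_(k < m) (c * \sum_(l < n) phi i l * ((y l k - y i k) * e k)
                               - lw * (y i k * e k))).
    apply: eq_bigr => k _; rewrite accE mulrBl -!mulrA mulr_suml.
    by congr (c * _ - _); apply: eq_bigr => l _; rewrite mulrA.
  rewrite sumrB -!mulr_sumr exchange_big /=; congr (c * _ - _).
  apply: eq_bigr => l _; rewrite -mulr_sumr /f -sumrB; congr (_ * _).
  by apply: eq_bigr => k _; rewrite mulrBl.
have [i _ imax] := @arg_maxP _ R _ a predT f erefl.
have [j _ jmin] := @arg_minP _ R _ a predT f erefl.
exists i, j.
have fab : f b < f a.
  rewrite -subr_gt0 (_ : f a - f b = \sum_(k < m) (y a k - y b k) ^+ 2) //.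
  by rewrite /f -sumrB; apply: eq_bigr => k _; rewrite -mulrBl.
have acc_i : \sum_(k < m) acc i k * e k <= - lw * f i.
  suff : c * \sum_(l < n) phi i l * (f l - f i) <= 0 by rewrite acc_e; lra.
  apply: mulr_ge0_le0 => //; apply: sumr_le0 => l _.
  by apply: mulr_ge0_le0 => //; rewrite subr_le0; exact: imax.
have acc_j : - lw * f j <= \sum_(k < m) acc j k * e k.
  suff : 0 <= c * \sum_(l < n) phi j l * (f l - f j) by rewrite acc_e; lra.
  by apply/mulr_ge0/sumr_ge0 => // l _; apply: mulr_ge0 => //; rewrite subr_ge0; exact: jmin.
have dacc_e : \sum_(k < m) (acc i k - acc j k) * e k < 0.
  have fai : f a <= f i := imax a isT.
  have fji : f j < f i by have := jmin b isT; lra.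
  have : 0 < lw * (f i - f j) by rewrite mulr_gt0 // subr_gt0.
  under eq_bigr do rewrite mulrBl.
  rewrite sumrB; lra.
rewrite lt_def sumsq_ge0 andbT; apply/negP => /sumsq_eq0P dacc0.
by move: dacc_e; rewrite big1 ?ltxx // => k _; rewrite dacc0 mul0r.
Qed.

Section PairwiseQuantities.
Context {R : realType} {N M : nat}.
Implicit Types (y z : 'I_N -> 'I_M -> R -> R) (i j : 'I_N) (s : R).

Definition pairdiff y i j (k : 'I_M) s := y i k s - y j k s.

Lemma sqdist_ge0 y i j s : 0 <= sqdist y i j s.
Proof. exact: sumsq_ge0. Qed.

Lemma sqdistC y i j s : sqdist y i j s = sqdist y j i s.
Proof. by apply: eq_bigr => k _; rewrite -sqrrN opprB. Qed.

Lemma eucl_dist_eq0 y i j s : (eucl_dist y i j s == 0) = (sqdist y i j s == 0).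
Proof. by rewrite sqrtr_eq0 eq_le sqdist_ge0 andbT. Qed.

Lemma sum_eucl_dist_eq0 y s : \sum_i \sum_j eucl_dist y i j s = 0 ->
  forall i j k, y i k s = y j k s.
Proof.
have ed_ge0 i j : 0 <= eucl_dist y i j s by exact: sqrtr_ge0.
move=> sum0 i j k; apply/eqP; rewrite -subr_eq0; apply/eqP; move: k; apply/sumsq_eq0P.
have row0 := psumr_eq0P (fun i' _ => sumr_ge0 _ (fun j' _ => ed_ge0 i' j')) sum0 (i:=i) isT.
by rewrite -eucl_dist_eq0 (psumr_eq0P (fun j' _ => ed_ge0 i j') row0).
Qed.

Lemma sum_eucl_dist_neq0 y s : \sum_i \sum_j eucl_dist y i j s != 0 ->
  exists a b, 0 < sqdist y a b s.
Proof.
apply: contra_neqP => no_pair; apply: big1 => a _; apply: big1 => b _.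
apply/eqP; rewrite eucl_dist_eq0 eq_le sqdist_ge0 andbT leNgt.
by apply/negP => ab; apply: no_pair; exists a, b.
Qed.

Lemma is_derive_sqdist y z i j s : (forall i k, is_derive s 1 (y i k) (z i k s)) ->
  is_derive s 1 (sqdist y i j)
    (\sum_(k < M) 2 * (pairdiff y i j k s * pairdiff z i j k s)).
Proof. by move=> yz; apply: is_derive_sqsum => k; apply: is_deriveB_fun. Qed.

Lemma is_derive_Xhat y z s : (forall i k, is_derive s 1 (y i k) (z i k s)) ->
  is_derive s 1 (Xhat y) (\sum_i \sum_(k < M) 2 * (y i k s * z i k s)).
Proof. by move=> yz; apply: is_derive_sum_fun => i; exact: is_derive_sqsum. Qed.

Lemma add1_sqdist_gt0 y i j s : 0 < 1 + sqdist y i j s.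
Proof. by rewrite ltr_pwDl ?sqdist_ge0. Qed.

Lemma phihat_gt0 gamma y i j s : 0 < phihat gamma y i j s.
Proof. by rewrite powR_gt0 ?add1_sqdist_gt0. Qed.

Lemma phihatC gamma y i j s : phihat gamma y i j s = phihat gamma y j i s.
Proof. by rewrite /phihat sqdistC. Qed.

Definition dphihat gamma y z i j s := - (gamma / 2) *
  powR (1 + sqdist y i j s) (- (gamma / 2) - 1) *
  \sum_(k < M) 2 * (pairdiff y i j k s * pairdiff z i j k s).

Lemma is_derive_add1_sqdist y z i j s : (forall i k, is_derive s 1 (y i k) (z i k s)) ->
  is_derive s 1 (fun u => 1 + sqdist y i j u)
    (\sum_(k < M) 2 * (pairdiff y i j k s * pairdiff z i j k s)).
Proof.
move=> yz; have d1 := is_derive_cst (1 : R) s 1.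
exact: is_derive_eq (is_deriveD_fun d1 (is_derive_sqdist i j yz)) (add0r _).
Qed.

Lemma is_derive_phihat gamma y z i j s : (forall i k, is_derive s 1 (y i k) (z i k s)) ->
  is_derive s 1 (phihat gamma y i j) (dphihat gamma y z i j s).
Proof.
move=> yz.
exact: is_derive_powR_fun _ (is_derive_add1_sqdist i j yz) (add1_sqdist_gt0 y i j s).
Qed.

End PairwiseQuantities.

Definition S_summand {R : realType} (gamma r : R) : R :=
  if gamma < 2 then powR (1 + r) (- ((gamma - 2) / 2)) - 1
  else if gamma == 2 then ln (1 + r)
  else 1 - powR (1 + r) (- ((gamma - 2) / 2)).

Lemma S_gammaE {R : realType} {N M : nat} (gamma : R) (y : 'I_N -> 'I_M -> R -> R)
    (s : R) :
  S_gamma gamma y s = N%:R^-1 * \sum_i \sum_j S_summand gamma (sqdist y i j s).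
Proof. by rewrite /S_gamma /S_summand; case: ifP => _; last case: ifP. Qed.

Lemma beta_gamma_gt0 {R : realType} (gamma : R) : 0 < beta_gamma gamma.
Proof.
by rewrite /beta_gamma; case: (ltgtP gamma 2); rewrite ?subr_gt0.
Qed.

Lemma is_derive_S_summand {R : realType} (gamma r : R) : 0 <= r ->
  is_derive r 1 (S_summand gamma) (beta_gamma gamma / 2 * powR (1 + r) (- (gamma / 2))).
Proof.
move=> r_ge0; have r1_gt0 : 0 < 1 + r by rewrite ltr_pwDl.
have d1r : is_derive r 1 (fun u => 1 + u) 1.
  have d1 := is_derive_cst (1 : R) r 1.
  exact: is_derive_eq (is_deriveD_fun d1 (is_derive_id r 1)) (add0r 1).
have dpow := is_derive_powR_fun (- ((gamma - 2) / 2)) d1r r1_gt0.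
have expE : - ((gamma - 2) / 2) - 1 = - (gamma / 2) by lra.
rewrite /S_summand /beta_gamma; case: (ltgtP gamma 2) => [_|_|->].
- apply: is_derive_eq (is_deriveB_fun dpow (is_derive_cst (1 : R) r 1)) _.
  by rewrite expE; ring.
- apply: is_derive_eq (is_deriveB_fun (is_derive_cst (1 : R) r 1) dpow) _.
  by rewrite expE; ring.
- apply: is_derive_eq (is_derive_ln_fun d1r r1_gt0) _.
  by rewrite divff // powR_inv1 ?ltW // mul1r mulr1.
Qed.

Lemma is_derive_S_gamma {R : realType} {N M : nat} (gamma : R)
    (y z : 'I_N -> 'I_M -> R -> R) (s : R) :
  (forall i k, is_derive s 1 (y i k) (z i k s)) ->
  is_derive s 1 (S_gamma gamma y) (N%:R^-1 * \sum_i \sum_j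
    (beta_gamma gamma / 2 * phihat gamma y i j s *
     \sum_(k < M) 2 * (pairdiff y i j k s * pairdiff z i j k s))).
Proof.
move=> yz; rewrite (_ : S_gamma gamma y = fun u => S_gamma gamma y u) //.
under [fun u => _]funext do rewrite S_gammaE.
apply: is_deriveZ_fun; apply: is_derive_sum_fun => i; apply: is_derive_sum_fun => j.
exact: is_derive1_comp (is_derive_S_summand gamma (sqdist_ge0 y i j s))
                       (is_derive_sqdist i j yz).
Qed.

Section HerdingEnergy.
Context {R : realType} {N M : nat}.
Variables (gamma lx lv lw : R) (x v : 'I_N -> 'I_M -> R -> R).
Implicit Types (i j : 'I_N) (k : 'I_M) (s : R).

Definition accel i k s :=
  lx / N%:R * \sum_(j < N) phihat gamma x i j s * (x j k s - x i k s)
  + lv / N%:R * \sum_(j < N) phihat gamma x i j s * (v j k s - v i k s)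
  - lw * x i k s.

Definition dissipation s := - (lv / N%:R) *
  \sum_i \sum_j wsqnorm (phihat gamma x i j) (pairdiff v i j) s.

Definition dissipation_deriv s := - (lv / N%:R) * \sum_i \sum_j
  wsqnorm_deriv (phihat gamma x i j) (dphihat gamma x v i j) (pairdiff v i j)
    (pairdiff accel i j) s.

Lemma accel_flock t : (forall i j k, v i k t = v j k t) -> forall i k,
  accel i k t = lx / N%:R * \sum_l phihat gamma x i l t * (x l k t - x i k t) - lw * x i k t.
Proof.
move=> v_eq i k; rewrite /accel [X in lv / _ * X]big1 ?mulr0 ?addr0 // => l _.
by rewrite (v_eq l i) subrr mulr0.
Qed.

Lemma accel_spread t a b : (forall i j k, v i k t = v j k t) ->
  0 < lx -> 0 < lw -> 0 < sqdist x a b t ->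
  exists i j, 0 < \sum_k pairdiff accel i j k t ^+ 2.
Proof.
move=> v_eq lx_gt0 lw_gt0.
apply: attraction_spread (accel_flock v_eq) => //; first by rewrite divr_ge0 // ltW.
by move=> i j; exact/ltW/phihat_gt0.
Qed.

Hypothesis x_deriv : forall s, 0 < s -> forall i k, is_derive s 1 (x i k) (v i k s).
Hypothesis v_deriv : forall s, 0 < s -> forall i k, is_derive s 1 (v i k) (accel i k s).

Lemma is_derive_E2 s : 0 < s -> is_derive s 1 (E2 gamma lx lw x v) (dissipation s).
Proof.
move=> s_gt0; have xv := x_deriv s_gt0; have va := v_deriv s_gt0.
apply: (is_derive_eq (is_deriveD_fun (is_deriveD_fun (is_deriveZ_fun lw (is_derive_Xhat xv))
  (is_derive_Xhat va)) (is_deriveZ_fun (lx / beta_gamma gamma) (is_derive_S_gamma gamma xv)))).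
have accelE : \sum_i \sum_k 2 * (v i k s * accel i k s) =
    \sum_i \sum_k 2 * (v i k s * (lx / N%:R * \sum_j phihat gamma x i j s * (x j k s - x i k s)))
  + \sum_i \sum_k 2 * (v i k s * (lv / N%:R * \sum_j phihat gamma x i j s * (v j k s - v i k s)))
  - lw * \sum_i \sum_k 2 * (x i k s * v i k s).
  rewrite mulr_sumr -big_split -sumrB; apply: eq_bigr => i _.
  by rewrite mulr_sumr -big_split -sumrB; apply: eq_bigr => k _ /=; rewrite /accel; ring.
rewrite accelE !(sum_coupling_symmetric _ _ _ (fun i j => phihatC gamma x i j s)) /=.
have S_term : lx / beta_gamma gamma * (N%:R^-1 * \sum_i \sum_j
    (beta_gamma gamma / 2 * phihat gamma x i j s *
     \sum_k 2 * (pairdiff x i j k s * pairdiff v i j k s)))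
  = lx / N%:R * \sum_i \sum_j
      phihat gamma x i j s * \sum_k (x i k s - x j k s) * (v i k s - v j k s).
  have beta_neq0 : beta_gamma gamma != 0 by rewrite gt_eqF ?beta_gamma_gt0.
  rewrite !mulr_sumr; apply: eq_bigr => i _; rewrite !mulr_sumr; apply: eq_bigr => j _.
  (* N may be 0: hiding N^-1 keeps field from asking for N != 0. *)
  by rewrite -mulr_sumr /pairdiff; set invN := N%:R^-1; field.
have V_term : \sum_i \sum_j
      phihat gamma x i j s * \sum_k (v i k s - v j k s) * (v i k s - v j k s)
    = \sum_i \sum_j wsqnorm (phihat gamma x i j) (pairdiff v i j) s.
  by apply: eq_bigr => i _; apply: eq_bigr => j _; under eq_bigr do rewrite -expr2.
rewrite S_term /dissipation -V_term; ring.
Qed.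

Lemma derivable_accel i k s : 0 < s -> derivable (accel i k) s 1.
Proof.
move=> s_gt0; have xv := x_deriv s_gt0; have va := v_deriv s_gt0.
have coupling (y : 'I_N -> 'I_M -> R -> R) (dy : 'I_N -> 'I_M -> R) c :
    (forall i k, is_derive s 1 (y i k) (dy i k)) ->
    derivable (fun u => c * \sum_j phihat gamma x i j u * (y j k u - y i k u)) s 1.
  move=> ydy.
  have dterm j := is_deriveM_fun (is_derive_phihat gamma i j xv)
    (is_deriveB_fun (ydy j k) (ydy i k)).
  have d := is_deriveZ_fun c (is_derive_sum_fun dterm); exact: ex_derive.
have dx := derivableP (coupling _ _ (lx / N%:R) xv).
have dv := derivableP (coupling _ _ (lv / N%:R) va).
have d := is_deriveB_fun (is_deriveD_fun dx dv) (is_deriveZ_fun lw (xv i k)).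
exact: ex_derive.
Qed.

Lemma derivable_dphihat i j s : 0 < s -> derivable (dphihat gamma x v i j) s 1.
Proof.
move=> s_gt0; have xv := x_deriv s_gt0; have va := v_deriv s_gt0.
have dpow := is_derive_powR_fun (- (gamma / 2) - 1) (is_derive_add1_sqdist i j xv)
  (add1_sqdist_gt0 x i j s).
have dterm k := is_deriveZ_fun 2 (is_deriveM_fun (is_deriveB_fun (xv i k) (xv j k))
                                                 (is_deriveB_fun (va i k) (va j k))).
have d := is_deriveM_fun (is_deriveZ_fun (- (gamma / 2)) dpow) (is_derive_sum_fun dterm).
exact: ex_derive.
Qed.

Lemma is_derive_dissipation s : 0 < s -> is_derive s 1 dissipation (dissipation_deriv s).
Proof.
move=> s_gt0; have xv := x_deriv s_gt0; have va := v_deriv s_gt0.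
have dpair i j := is_derive_wsqnorm (w := pairdiff v i j) (dw := pairdiff accel i j)
  (is_derive_phihat gamma i j (z := v) xv) (fun k => is_deriveB_fun (va i k) (va j k)).
exact: is_deriveZ_fun _ (is_derive_sum_fun (fun i => is_derive_sum_fun (dpair i))).
Qed.

Lemma is_derive_dissipation_deriv t : 0 < t -> (forall i j k, v i k t = v j k t) ->
  is_derive t 1 dissipation_deriv (- (lv / N%:R) *
    \sum_i \sum_j 2 * (phihat gamma x i j t * \sum_k pairdiff accel i j k t ^+ 2)).
Proof.
move=> t_gt0 v_eq; have xv := x_deriv t_gt0; have va := v_deriv t_gt0.
have da i k := derivable_accel (i := i) (k := k) t_gt0.
have v_t i j k : pairdiff v i j k t = 0 by rewrite /pairdiff (v_eq i j) subrr.
have dpair i j := is_derive_wsqnorm_deriv (dw := pairdiff accel i j) (v_t i j)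
  (is_derive_phihat gamma i j (z := v) xv) (derivable_dphihat (i := i) (j := j) t_gt0)
  (fun k => is_deriveB_fun (va i k) (va j k)) (fun k => derivableB (da i k) (da j k)).
exact: is_deriveZ_fun _ (is_derive_sum_fun (fun i => is_derive_sum_fun (dpair i))).
Qed.

Lemma E2_derivatives_flock t : 0 < t -> (forall i j k, v i k t = v j k t) ->
  [/\ derive1 (E2 gamma lx lw x v) t = 0,
      derive1 (derive1 (E2 gamma lx lw x v)) t = 0
    & derive1 (derive1 (derive1 (E2 gamma lx lw x v))) t = - (lv / N%:R) *
      \sum_i \sum_j 2 * (phihat gamma x i j t * \sum_k pairdiff accel i j k t ^+ 2)].
Proof.
move=> t_gt0 v_eq.
have near_t (P : R -> Prop) : (forall s, 0 < s -> P s) -> \forall s \near t, P s.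
  by move=> P_pos; apply: filterS (lt_nbhsr t_gt0).
have [-> -> ->] := derive1_thrice (near_t _ is_derive_E2) (near_t _ is_derive_dissipation)
  (is_derive_dissipation_deriv t_gt0 v_eq).
have v_t i j k : pairdiff v i j k t = 0 by rewrite /pairdiff (v_eq i j) subrr.
split=> //; rewrite ?/dissipation ?/dissipation_deriv big1 ?mulr0 // => i _;
  apply: big1 => j _; [exact: wsqnorm_eq0 | exact: wsqnorm_deriv_eq0].
Qed.

End HerdingEnergy.

Theorem lemma5p3 (R : realType) (M N : nat) (gamma lx lv lw : R)
  (x v : 'I_N -> 'I_M -> R -> R) (t : R) :
  (1 <= M)%N -> (1 <= N)%N ->
  0 < gamma -> 0 < lx -> 0 < lv -> 0 < lw ->
  (forall s : R, 0 < s -> forall (i : 'I_N) (k : 'I_M),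
     is_derive s 1 (x i k) (v i k s)) ->
  (forall s : R, 0 < s -> forall (i : 'I_N) (k : 'I_M),
     is_derive s 1 (v i k)
       (lx / N%:R * \sum_(j < N) phihat gamma x i j s * (x j k s - x i k s)
        + lv / N%:R * \sum_(j < N) phihat gamma x i j s * (v j k s - v i k s)
        - lw * x i k s)) ->
  0 < t ->
  \sum_(i < N) \sum_(j < N) eucl_dist v i j t = 0 ->
  \sum_(i < N) \sum_(j < N) eucl_dist x i j t != 0 ->
  derive1 (E2 gamma lx lw x v) t = 0 /\
  derive1 (derive1 (E2 gamma lx lw x v)) t = 0 /\
  derive1 (derive1 (derive1 (E2 gamma lx lw x v))) t < 0.
Proof.
move=> _ N_gt0 _ lx_gt0 lv_gt0 lw_gt0 x_deriv v_deriv t_gt0 v_flock x_spread.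
have v_eq := sum_eucl_dist_eq0 v_flock.
have [a [b xab]] := sum_eucl_dist_neq0 x_spread.
have [i [j aij]] := accel_spread gamma lv v_eq lx_gt0 lw_gt0 xab.
have [-> -> ->] := E2_derivatives_flock x_deriv v_deriv t_gt0 v_eq.
split=> //; split=> //.
rewrite mulNr oppr_lt0 mulr_gt0 ?divr_gt0 ?ltr0n //.
apply: (psumr2_gt0 (i := i) (j := j)) => [p q|]; last by rewrite !mulr_gt0 ?phihat_gt0.
by rewrite !mulr_ge0 ?sumsq_ge0 ?ltW ?phihat_gt0.
Qed.
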